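(* For any causal order $\Omega$ on a finite set $E$ and any family $\underline{I}=(I_\omega)_{\omega\in E}$ of non-empty finite sets, $\mathrm{Hist}(\Omega,\underline I)$ is a $\vee$-prime subset of the set of partial functions on $\underline I$.
   Context: A causal order $\Omega$ on $E$ is a preorder $\le_\Omega$; $\downarrow\omega=\{\xi:\xi\le_\Omega\omega\}$. Partial functions on $\underline I$: functions $f$ with $\mathrm{dom}(f)\subseteq E$ and $f(\omega)\in I_\omega$. $\mathrm{Hist}(\Omega,\underline I)=\bigcup_{\xi\in E}\prod_{\omega\in\downarrow\xi}I_\omega$. Two partial functions are compatible if they agree on the intersection of their domains; a compatible set $\mathcal F$ has join $\bigvee\mathcal F$, the partial function on $\bigcup_{f\in\mathcal F}\mathrm{dom}(f)$ extending every member. A set $\Theta$ of partial functions is $\vee$-prime if for every compatible $\mathcal F\subseteq\Theta$ with $\bigvee\mathcal F\in\Theta$ we have $\bigvee\mathcal F\in\mathcal F$. *)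

From mathcomp Require Import all_boot.
Set Implicit Arguments. Unset Strict Implicit. Unset Printing Implicit Defensive.

Definition causal_order (E : finType) (le : rel E) : Prop :=
  reflexive le /\ transitive le.

(* Partial functions on the family I: f w = Some x means w \in dom f and f w = x. *)
Definition pfun (E : finType) (I : E -> finType) := forall w : E, option (I w).

Definition dom (E : finType) (I : E -> finType) (f : pfun I) (w : E) : Prop :=
  f w <> None.

Definition downset (E : finType) (le : rel E) (xi : E) : pred E :=
  [pred w | le w xi].

(* Hist(Omega, I) = union over xi of the products over the downset of xi,
   viewed as partial functions with domain exactly the downset of xi. *)
Definition Hist (E : finType) (le : rel E) (I : E -> finType) (f : pfun I) : Prop :=
  exists xi : E, forall w : E, dom f w <-> w \in downset le xi.

Definition compatible (E : finType) (I : E -> finType) (f g : pfun I) : Prop :=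
  forall w : E, dom f w -> dom g w -> f w = g w.

Definition compatible_set (E : finType) (I : E -> finType) (F : pfun I -> Prop) : Prop :=
  forall f g, F f -> F g -> compatible f g.

Definition is_join (E : finType) (I : E -> finType) (F : pfun I -> Prop) (g : pfun I) : Prop :=
  (forall w, dom g w <-> exists2 f, F f & dom f w) /\
  (forall f, F f -> forall w, dom f w -> g w = f w).

Definition join_prime (E : finType) (I : E -> finType) (Theta : pfun I -> Prop) : Prop :=
  forall (F : pfun I -> Prop) (g : pfun I),
    (forall f, F f -> Theta f) -> compatible_set F -> is_join F g -> Theta g -> F g.

From mathcomp Require Import all_boot.
From Stdlib Require Import FunctionalExtensionality.

(* If the join g of a compatible family F is a history with top xi, then xi
   lies in the domain of some f in F.  Being itself a history, f has a top
   xi' with xi <= xi' <= xi, so f and g have the same domain; since g extends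
   f, they are equal and g belongs to F. *)

Section PartialFunctions.

Variables (E : finType) (I : E -> finType).

Lemma extension_eq (f g : pfun I) :
  (forall w, dom f w <-> dom g w) -> (forall w, dom f w -> g w = f w) -> g = f.
Proof.
move=> eq_dom ext; apply: functional_extensionality_dep => w.
case: (f w =P None) => [fwN | /ext //].
by case: (g w =P None) => [-> // | /eq_dom /(_ fwN)].
Qed.

Lemma join_dom (F : pfun I -> Prop) (g f : pfun I) :
  is_join F g -> F f -> forall w, dom f w -> dom g w.
Proof. by move=> [join_domE _] Ff w fw; apply/join_domE; exists f. Qed.

End PartialFunctions.

Section Downsets.

Variables (E : finType) (le : rel E).

Lemma downset_refl (xi : E) : reflexive le -> xi \in downset le xi.
Proof. by move=> le_refl; rewrite inE le_refl. Qed.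

Lemma downset_sub (xi xi' : E) :
  transitive le -> le xi xi' -> {subset downset le xi <= downset le xi'}.
Proof. by move=> le_trans le_xi w; rewrite !inE => /le_trans; apply. Qed.

Lemma dom_eq_downset (I : E -> finType) (f g : pfun I) (xi xi' : E) :
  transitive le ->
  (forall w, dom f w <-> w \in downset le xi') ->
  (forall w, dom g w <-> w \in downset le xi) ->
  dom f xi -> dom g xi' -> forall w, dom f w <-> dom g w.
Proof.
move=> le_trans domf domg /domf fxi /domg gxi' w.
split=> [/domf | /domg] w_down.
- by apply/domg; exact: downset_sub w_down.
- by apply/domf; exact: downset_sub w_down.
Qed.

End Downsets.

Theorem proposition3 (E : finType) (le : rel E) (I : E -> finType) :
  causal_order le ->
  (forall w : E, 0 < #|I w|) ->
  join_prime (Hist le (I := I)).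
Proof.
move=> [le_refl le_trans] _ F g F_Hist _ g_join [xi domg].
have [f Ff fxi] : exists2 f, F f & dom f xi.
  by apply/(proj1 g_join)/domg/downset_refl.
have [xi' domf] := F_Hist f Ff.
have gxi' : dom g xi'.
  by apply: join_dom g_join Ff _ _; apply/domf/downset_refl.
suff -> : g = f by [].
apply: extension_eq (proj2 g_join f Ff).
exact: dom_eq_downset domf domg fxi gxi'.
Qed.
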